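(* Let $w$ be a word over $\Sigma$ and let $(h_1,p_1)<(h_2,p_2)<\cdots<(h_s,p_s)$ be Abelian periods of $w$ such that $(|w|-h_i)\bmod p_i=t$ for all $1\le i\le s$, for a common integer $t>0$. Then for every letter $a\in\Sigma$: if $(h_1,p_1)$ is an Abelian period of $wa$, then $(h_2,p_2),\dots,(h_s,p_s)$ are also Abelian periods of $wa$.
   Context: Words are finite sequences over a finite alphabet $\Sigma=\{a_1,\dots,a_\sigma\}$; $wa$ denotes $w$ followed by the letter $a$. The Parikh vector of a word $u$ is $\mathcal{P}_u=(|u|_{a_1},\dots,|u|_{a_\sigma})$, where $|u|_a$ is the number of occurrences of $a$ in $u$; its norm is $|\mathcal{P}_u|=|u|$. $\mathcal{P}\subset\mathcal{Q}$ means $\mathcal{P}[j]\le\mathcal{Q}[j]$ for all $j$ and $|\mathcal{P}|<|\mathcal{Q}|$. A word $w$ has Abelian period $(h,p)$ (integers $h\ge0$, $p\ge1$) if $w=u_0u_1\cdots u_{k-1}u_k$ for some $k\ge 2$ (with $u_0,u_k$ possibly empty) with $|u_0|=h$, $|u_1|=p$ and $\mathcal{P}_{u_0}\subset\mathcal{P}_{u_1}=\cdots=\mathcal{P}_{u_{k-1}}\supset\mathcal{P}_{u_k}$; the tail $u_k$ then has length $(|w|-h)\bmod p$. Pairs are ordered by $(h,p)<(h',p')$ iff $p<p'$, or $p=p'$ and $h<h'$. *)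

From mathcomp Require Import all_boot.
Set Implicit Arguments. Unset Strict Implicit. Unset Printing Implicit Defensive.

Definition parikh (T : finType) (u : seq T) : T -> nat := fun a => count_mem a u.

Definition parikh_eq (T : finType) (u v : seq T) : Prop :=
  forall a : T, parikh u a = parikh v a.

Definition parikh_sub (T : finType) (u v : seq T) : Prop :=
  (forall a : T, parikh u a <= parikh v a) /\ size u < size v.

(* w has Abelian period (h,p): w = u0 u1 ... u_{k-1} u_k, k >= 2,
   |u0| = h, |u1| = p, P_{u0} \subset P_{u1} = ... = P_{u_{k-1}} \supset P_{u_k}.
   Here u1 :: mid = [u1; ...; u_{k-1}] (so k - 1 >= 1 blocks). *)
Definition abelian_period (T : finType) (w : seq T) (h p : nat) : Prop :=
  1 <= p /\
  exists (u0 u1 : seq T) (mid : seq (seq T)) (uk : seq T),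
    [/\ w = u0 ++ u1 ++ flatten mid ++ uk,
        size u0 = h /\ size u1 = p,
        parikh_sub u0 u1,
        (forall u, u \in mid -> parikh_eq u u1)
      & parikh_sub uk u1].

Definition ap_lt (x y : nat * nat) : bool :=
  (x.2 < y.2) || ((x.2 == y.2) && (x.1 < y.1)).

From mathcomp Require Import all_boot.
Set Implicit Arguments. Unset Strict Implicit. Unset Printing Implicit Defensive.

(* Let (h,p) be an Abelian period of w with tail length
   t = (|w|-h) mod p.  The factorization is then forced: its first block is
   u1 = w[h, h+p) and its tail is the suffix s of length t of w.  Moreover the
   last full block has the Parikh vector of u1, so for every letter b
     |u1|_b + |s|_b = |last p+t letters of w|_b.                     (1)
   Appending a letter a keeps (h,p) an Abelian period exactly when
   |s|_a < |u1|_a: either s.a becomes the new tail (t+1 < p), or it becomes a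
   new full block (t+1 = p).
   In the theorem all periods share the same tail s.  The hypothesis on
   (h1,p1) gives |s|_a < |u1|_a; sortedness gives p1 <= p, so by (1) the block
   of (h,p) holds at least as many a's as that of (h1,p1), and the criterion
   applies to (h,p) as well.
   The file first studies a fixed factorization, then derives the canonical
   form of an Abelian period, identity (1) and the extension criterion. *)

Section AbelianPeriods.
Variable T : finType.
Implicit Types (w u v : seq T) (a b : T).

Lemma parikh_eq_size u v : parikh_eq u v -> size u = size v.
Proof. by move=> Huv; apply: perm_size; apply/allP => x _ /=; apply/eqP; apply: Huv. Qed.

Lemma parikh_eq_of_le u v :
  (forall b, parikh u b <= parikh v b) -> size u = size v -> parikh_eq u v.
Proof.
move=> Hle Hsize.
have /count_subseqP [s sub_sv perm_su] : forall b, count_mem b u <= count_mem b v := Hle.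
have Hs : size s = size v by rewrite -(perm_size perm_su).
have [_] := size_subseq_leqif sub_sv; rewrite Hs eqxx => /esym/eqP Esv.
by move=> b; rewrite /parikh -Esv; apply/permP.
Qed.

Lemma drop_suffix u v : drop (size (u ++ v) - size v) (u ++ v) = v.
Proof. by rewrite size_cat addnK drop_size_cat. Qed.

Lemma count_drop_mono (P : pred T) n m w :
  n <= m -> count P (drop m w) <= count P (drop n w).
Proof.
move=> le_nm; rewrite -(subnK le_nm) -drop_drop.
by rewrite -{2}(cat_take_drop (m - n) (drop n w)) count_cat leq_addl.
Qed.

Lemma drop_rcons_suffix w a k :
  k <= size w -> drop (size (rcons w a) - k.+1) (rcons w a) = rcons (drop (size w - k) w) a.
Proof. by move=> le_kw; rewrite size_rcons subSS drop_rcons // leq_subr. Qed.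

Lemma count_mem_rcons u a : count_mem a (rcons u a) = (count_mem a u).+1.
Proof. by rewrite -cats1 count_cat /= eqxx addn1. Qed.

Section Factorization.
Variables (w u0 u1 uk : seq T) (mid : seq (seq T)).
Hypothesis Ew : w = u0 ++ u1 ++ flatten mid ++ uk.
Hypothesis Hmid : forall u, u \in mid -> parikh_eq u u1.
Hypothesis Huk : size uk < size u1.

Lemma size_mid_blocks : size (flatten mid) = size mid * size u1.
Proof.
elim: mid Hmid => [|u m IH] Hm //=.
rewrite size_cat (parikh_eq_size (Hm _ (mem_head _ _))) IH // => v Hv.
by apply: Hm; rewrite in_cons Hv orbT.
Qed.

Lemma factorization_tail_size : size uk = (size w - size u0) %% size u1.
Proof.
rewrite Ew !size_cat size_mid_blocks addKn addnA -mulSn.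
by rewrite modnMDl modn_small.
Qed.

Lemma factorization_tail : uk = drop (size w - size uk) w.
Proof. by rewrite Ew !catA drop_suffix. Qed.

Lemma factorization_block : u1 = take (size u1) (drop (size u0) w).
Proof. by rewrite Ew drop_size_cat // take_size_cat. Qed.

Lemma count_last_blocks b :
  count_mem b (drop (size w - (size u1 + size uk)) w) = count_mem b u1 + count_mem b uk.
Proof.
have [pre [B [EB pB]]] : exists pre B, w = pre ++ B ++ uk /\ parikh_eq B u1.
  move: Hmid; rewrite Ew; case/lastP: mid => [|m B] Hm.
    by exists u0, u1.
  exists (u0 ++ u1 ++ flatten m), B; rewrite flatten_rcons -!catA; split => //.
  by apply: Hm; rewrite mem_rcons mem_head.
rewrite -(parikh_eq_size pB) -size_cat EB drop_suffix count_cat.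
by have := pB b; rewrite /parikh => ->.
Qed.

Lemma factorization_rcons a :
  parikh_sub u0 u1 -> parikh_sub uk u1 -> count_mem a uk < count_mem a u1 ->
  abelian_period (rcons w a) (size u0) (size u1).
Proof.
move=> sub0 subk lt_a.
have le_rcons : forall b, parikh (rcons uk a) b <= parikh u1 b.
  move=> b; rewrite /parikh -cats1 count_cat /= addn0.
  by case: (eqVneq a b) => [<-|_]; [rewrite addn1 | rewrite addn0; apply: subk.1].
have Ewa : rcons w a = u0 ++ u1 ++ flatten mid ++ rcons uk a by rewrite Ew !rcons_cat.
split; first exact: leq_ltn_trans (leq0n _) Huk.
case: (ltngtP (size uk).+1 (size u1)) => [lt_tail|gt_tail|eq_tail].
- by exists u0, u1, mid, (rcons uk a); split => //; split; rewrite ?size_rcons.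
- by move: gt_tail; rewrite ltnS leqNgt Huk.
- exists u0, u1, (rcons mid (rcons uk a)), [::]; split => //.
  + by rewrite Ewa flatten_rcons cats0.
  + move=> u; rewrite mem_rcons in_cons => /orP [/eqP ->|]; last exact: Hmid.
    by apply: parikh_eq_of_le; rewrite ?size_rcons.
  + by split => //=; rewrite -eq_tail.
Qed.

End Factorization.

Definition ap_tail_size w h p := (size w - h) %% p.
Definition ap_block w h p := take p (drop h w).
Definition ap_tail w h p := drop (size w - ap_tail_size w h p) w.

Lemma abelian_periodP w h p :
  abelian_period w h p ->
  exists u0 mid,
    [/\ w = u0 ++ ap_block w h p ++ flatten mid ++ ap_tail w h p,
        size u0 = h /\ size (ap_block w h p) = p,
        parikh_sub u0 (ap_block w h p),
        (forall u, u \in mid -> parikh_eq u (ap_block w h p))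
      & parikh_sub (ap_tail w h p) (ap_block w h p)].
Proof.
case=> _ [u0 [u1 [mid [uk [Ew [<- <-] sub0 Hmid subk]]]]].
have Hsize := factorization_tail_size Ew Hmid subk.2.
have -> : ap_block w (size u0) (size u1) = u1 by rewrite /ap_block -(factorization_block Ew).
have -> : ap_tail w (size u0) (size u1) = uk.
  by rewrite /ap_tail /ap_tail_size -Hsize -(factorization_tail Ew).
by exists u0, mid.
Qed.

(* Identity (1): first block plus tail count like the last p+t letters. *)
Lemma ap_block_tail_count w h p b :
  abelian_period w h p ->
  count_mem b (ap_block w h p) + count_mem b (ap_tail w h p)
  = count_mem b (drop (size w - (p + ap_tail_size w h p)) w).
Proof.
case/abelian_periodP=> u0 [mid [Ew [s0 sb] _ Hmid subk]].
have Hsize := factorization_tail_size Ew Hmid subk.2.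
by rewrite -(count_last_blocks Ew Hmid) Hsize s0 sb.
Qed.

Lemma ap_block_count_mono w h p h' p' b :
  abelian_period w h p -> abelian_period w h' p' ->
  ap_tail_size w h p = ap_tail_size w h' p' -> p <= p' ->
  count_mem b (ap_block w h p) <= count_mem b (ap_block w h' p').
Proof.
move=> Pw Pw' Et le_pp'.
have Ptail : ap_tail w h p = ap_tail w h' p' by rewrite /ap_tail Et.
rewrite -(leq_add2r (count_mem b (ap_tail w h p))).
rewrite {2}Ptail !ap_block_tail_count // Et.
by apply: count_drop_mono; rewrite leq_sub2l // leq_add2r.
Qed.

Lemma abelian_period_rcons w h p a :
  abelian_period w h p ->
  count_mem a (ap_tail w h p) < count_mem a (ap_block w h p) ->
  abelian_period (rcons w a) h p.
Proof.
case/abelian_periodP=> u0 [mid [Ew [s0 sb] sub0 Hmid subk]] lt_a.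
by rewrite -s0 -sb; apply: (factorization_rcons Ew Hmid subk.2 sub0 subk lt_a).
Qed.

Lemma abelian_period_rcons_count w h p a :
  abelian_period w h p -> abelian_period (rcons w a) h p ->
  count_mem a (ap_tail w h p) < count_mem a (ap_block w h p).
Proof.
move=> Pw Pwa.
have [u0 [mid [Ew [s0 sb] _ _ subk]]] := abelian_periodP Pw.
have le_hpw : h + p <= size w by rewrite Ew !size_cat s0 sb addnA leq_addr.
have le_hw : h <= size w := leq_trans (leq_addr p h) le_hpw.
(* The first block lies inside w, so it is unchanged by appending a. *)
have Eblock : ap_block (rcons w a) h p = ap_block w h p.
  rewrite /ap_block drop_rcons // -cats1.
  by rewrite takel_cat // size_drop leq_subRL.
set t := ap_tail_size w h p.
have lt_tp : t < p.
  by rewrite /t /ap_tail_size ltn_mod -sb; apply: leq_ltn_trans (leq0n _) subk.2.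
have le_tw : t <= size w by rewrite ltnW // (leq_trans lt_tp) // (leq_trans (leq_addl h p)).
have Etail : ap_tail_size (rcons w a) h p = t.+1 %% p.
  rewrite /ap_tail_size size_rcons subSn //.
  by rewrite -addn1 -modnDml addn1.
have Esuffix := drop_rcons_suffix a le_tw.
(* Either the tail of w.a is (tail of w).a, or this word is its last block. *)
case: (ltngtP t.+1 p) => [lt_t1p|gt_t1p|eq_t1p].
- have [_ [_ [_ [_ _ _ _ [le_tail _]]]]] := abelian_periodP Pwa.
  move: (le_tail a); rewrite /parikh Eblock /ap_tail Etail modn_small //.
  by rewrite Esuffix count_mem_rcons.
- by move: gt_t1p; rewrite ltnS leqNgt lt_tp.
- have Etail0 : ap_tail_size (rcons w a) h p = 0 by rewrite Etail eq_t1p modnn.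
  have Elast : drop (size (rcons w a) - p) (rcons w a) = rcons (ap_tail w h p) a.
    by rewrite -{1}eq_t1p Esuffix.
  have := ap_block_tail_count a Pwa.
  rewrite {1}/ap_tail Etail0 subn0 drop_size Eblock /= !addn0 Elast.
  by rewrite count_mem_rcons => ->.
Qed.

End AbelianPeriods.

Lemma sorted_ap_lt_period (x0 : nat * nat) s :
  sorted ap_lt (x0 :: s) -> forall x, x \in s -> x0.2 <= x.2.
Proof.
move=> Hsort; apply/allP.
apply: (order_path_min (fun y z k => @leq_trans y.2 z.2 k.2)).
by apply: sub_path Hsort => y z /orP [/ltnW // | /andP [/eqP -> _]].
Qed.

Theorem mainTheorem7 (T : finType) (w : seq T) (a : T) (t : nat)
    (h1 p1 : nat) (rest : seq (nat * nat)) :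
  0 < t ->
  sorted ap_lt ((h1, p1) :: rest) ->
  (forall x, x \in (h1, p1) :: rest -> abelian_period w x.1 x.2) ->
  (forall x, x \in (h1, p1) :: rest -> (size w - x.1) %% x.2 = t) ->
  abelian_period (rcons w a) h1 p1 ->
  forall x, x \in rest -> abelian_period (rcons w a) x.1 x.2.
Proof.
move=> _ Hsort Hper Htail Pwa1 x Hx.
have Hx' : x \in (h1, p1) :: rest by rewrite in_cons Hx orbT.
have Pw1 := Hper _ (mem_head _ _); have Pw := Hper _ Hx'.
have Etail : ap_tail_size w h1 p1 = ap_tail_size w x.1 x.2.
  by rewrite /ap_tail_size (Htail _ (mem_head _ _)) (Htail _ Hx').
have lt_a1 := abelian_period_rcons_count Pw1 Pwa1.
apply: (abelian_period_rcons Pw); rewrite /ap_tail -Etail.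
apply: leq_trans lt_a1 (ap_block_count_mono _ Pw1 Pw Etail _).
exact: sorted_ap_lt_period Hsort _ Hx.
Qed.
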